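(* Let $k\in\mathbb{N}_0\cup\{\infty\}$, let $E,F$ be locally convex super vector spaces, $\mathcal{U}\subseteq\overline{E}^{(k)}$ an open subfunctor and $f\colon\mathcal{U}\to\overline{F}^{(k)}$ a natural transformation such that every $f_\Lambda$ ($\Lambda\in\mathbf{Gr}^{(k)}$) is smooth. Let $n,m\in\mathbb{N}$ with $\Lambda_m\in\mathbf{Gr}^{(k)}$, let $x\in\mathcal{U}_{\mathbb{R}}\subseteq\mathcal{U}_{\Lambda_m}$, and for $1\le i\le n$ let $y_i\in\lambda_{I_i}E_{|I_i|\bmod 2}\subseteq\overline{E}^{(k)}_{\Lambda_m}$ with $\emptyset\neq I_i\subseteq\{1,\dots,m\}$. Then $$d^nf_{\Lambda_m}(x)(y_1,\dots,y_n)\in\lambda_{I_1}\cdots\lambda_{I_n}F_{\ell\bmod 2},\qquad \ell:=\Big|\bigcup_{i=1}^nI_i\Big|,$$ and if the sets $I_1,\dots,I_n$ are not pairwise disjoint, then $d^nf_{\Lambda_m}(x)(y_1,\dots,y_n)=0$.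
   Context: Grassmann algebras: $\Lambda_k=\mathbb{R}[\lambda_1,\dots,\lambda_k]$ with $\lambda_i\lambda_j=-\lambda_j\lambda_i$, $\Lambda_0=\mathbb{R}$, basis $\lambda_I$ ($I\subseteq\{1..k\}$, $\lambda_I=\lambda_{i_1}\cdots\lambda_{i_r}$ for $i_1<\dots<i_r$), grading $\Lambda_{\bar 0},\Lambda_{\bar 1}$ by parity of $|I|$. $\mathbf{Gr}^{(k)}$: category of $\Lambda_0,\dots,\Lambda_k$ with parity-preserving unital algebra homomorphisms. For a locally convex super vector space $E=E_0\oplus E_1$, $\overline{E}^{(k)}_\Lambda=(E_0\otimes\Lambda_{\bar0})\oplus(E_1\otimes\Lambda_{\bar1})$ (product topology), functorial via $\mathrm{id}\otimes\varrho$; for $n\le m$ we identify $\overline{E}^{(k)}_{\Lambda_n}\subseteq\overline{E}^{(k)}_{\Lambda_m}$ via the inclusion $\Lambda_n\hookrightarrow\Lambda_m$, $\lambda_j\mapsto\lambda_j$; in particular $\overline{E}_{\mathbb{R}}=E_0$ and $\mathcal{U}_{\mathbb{R}}\subseteq\mathcal{U}_{\Lambda_m}$. An open subfunctor $\mathcal{U}$ consists of open $\mathcal{U}_\Lambda\subseteq\overline{E}^{(k)}_\Lambda$ stable under all $\overline{E}^{(k)}_\varrho$. Smoothness is Bastiani smoothness; $d^n$ denotes iterated directional derivatives. *)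

From Stdlib Require Import Reals FunctionalExtensionality.
From mathcomp Require Import all_boot.
Set Implicit Arguments. Unset Strict Implicit. Unset Printing Implicit Defensive.

Local Open Scope R_scope.

Record lcs := LCS {
  lcs_car :> Type;
  vzero : lcs_car;
  vadd : lcs_car -> lcs_car -> lcs_car;
  vopp : lcs_car -> lcs_car;
  vscal : R -> lcs_car -> lcs_car;
  vaddA : forall x y z, vadd x (vadd y z) = vadd (vadd x y) z;
  vaddC : forall x y, vadd x y = vadd y x;
  vadd0 : forall x, vadd vzero x = x;
  vaddN : forall x, vadd (vopp x) x = vzero;
  vscal1 : forall x, vscal 1 x = x;
  vscalA : forall a b x, vscal a (vscal b x) = vscal (a * b) x;
  vscalDr : forall a x y, vscal a (vadd x y) = vadd (vscal a x) (vscal a y);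
  vscalDl : forall a b x, vscal (a + b) x = vadd (vscal a x) (vscal b x);
  sidx : Type;
  snorm : sidx -> lcs_car -> R;
  snorm_add : forall i x y, snorm i (vadd x y) <= snorm i x + snorm i y;
  snorm_scal : forall i a x, snorm i (vscal a x) = Rabs a * snorm i x;
  snorm_sep : forall x, (forall i, snorm i x = 0) -> x = vzero
}.
Arguments vzero {l}.
Arguments vadd {l}.
Arguments vopp {l}.
Arguments vscal {l}.
Arguments snorm {l}.

Definition vsub (X : lcs) (x y : X) : X := vadd x (vopp y).

Definition is_open (X : lcs) (U : X -> Prop) : Prop :=
  forall x, U x -> exists (L : list (sidx X)) (d : R), 0 < d /\
    forall x', (forall i, List.In i L -> snorm i (vsub x' x) < d) -> U x'.

(* D is the family of iterated directional derivatives of f on U: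
   D x [::] = f x and
   D x (rcons ys y) = lim_{t->0} (D (x + t y) ys - D x ys) / t,
   i.e. d^{n+1} f(x)(y_1,...,y_n,y) = d (d^n f(.)(y_1..y_n))(x)(y). *)
Definition is_dfamily (X Y : lcs) (U : X -> Prop) (f : X -> Y)
  (D : X -> seq X -> Y) : Prop :=
  (forall x, U x -> D x [::] = f x) /\
  (forall x ys y, U x -> forall (j : sidx Y) eps, 0 < eps ->
     exists d, 0 < d /\ forall t, t <> 0 -> Rabs t < d ->
       U (vadd x (vscal t y)) ->
       snorm j (vsub (vscal (/ t) (vsub (D (vadd x (vscal t y)) ys) (D x ys)))
                     (D x (rcons ys y))) < eps).

(* joint continuity of each d^n f on U x X^n (product topology) *)
Definition dcont (X Y : lcs) (U : X -> Prop) (D : X -> seq X -> Y) : Prop :=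
  forall x ys, U x -> forall (j : sidx Y) eps, 0 < eps ->
    exists (L : list (sidx X)) (d : R), 0 < d /\
      forall x' ys', U x' -> size ys' = size ys ->
        (forall i, List.In i L -> snorm i (vsub x' x) < d /\
           forall k : nat, (k < size ys)%N ->
             snorm i (vsub (nth vzero ys' k) (nth vzero ys k)) < d) ->
        snorm j (vsub (D x' ys') (D x ys)) < eps.

Definition bsmooth (X Y : lcs) (U : X -> Prop) (f : X -> Y) : Prop :=
  exists D, is_dfamily U f D /\ dcont U D.

Record slcs := SLCS { sev : lcs; sod : lcs }.
Definition par (E : slcs) (b : bool) : lcs := if b then sod E else sev E.

Definition pcast (E : slcs) (b b' : bool) : par E b -> par E b' :=
  match b as b0, b' as b1 return par E b0 -> par E b1 with
  | true, true => fun x => x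
  | false, false => fun x => x
  | true, false => fun _ => @vzero (sev E)
  | false, true => fun _ => @vzero (sod E)
  end.
Arguments pcast E b b' : clear implicits.

(* Grassmann algebra Lambda_m, generators lambda_1..lambda_m indexed by *)
(* 'I_m; elements = coefficient functions on the basis lambda_I.        *)
Definition grass (m : nat) := {set 'I_m} -> R.
Definition gbasis m (I : {set 'I_m}) : grass m :=
  fun J => if J == I then 1 else 0.
Definition gadd m (u v : grass m) : grass m := fun I => u I + v I.
Definition gscale m (c : R) (u : grass m) : grass m := fun I => c * u I.
Definition ninv m (I J : {set 'I_m}) : nat :=
  #|[set p : 'I_m * 'I_m | (p.1 \in I) && (p.2 \in J) && (p.2 < p.1)%N]|.
(* lambda_I lambda_J = gsign I J K summed over K *)
Definition gsign m (I J K : {set 'I_m}) : R :=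
  if [disjoint I & J] && (K == I :|: J) then (-1) ^ (ninv I J) else 0.
Definition gmul m (u v : grass m) : grass m := fun K =>
  \big[Rplus/0]_(I : {set 'I_m}) \big[Rplus/0]_(J : {set 'I_m})
     (u I * v J * gsign I J K).
Definition geven m (u : grass m) : Prop := forall I : {set 'I_m}, odd #|I| -> u I = 0.
Definition godd m (u : grass m) : Prop := forall I : {set 'I_m}, ~~ odd #|I| -> u I = 0.

Record is_grhom a b (r : grass a -> grass b) : Prop := {
  grhom_add : forall u v, r (gadd u v) = gadd (r u) (r v);
  grhom_scale : forall c u, r (gscale c u) = gscale c (r u);
  grhom_one : r (gbasis set0) = gbasis set0;
  grhom_mul : forall u v, r (gmul u v) = gmul (r u) (r v);
  grhom_even : forall u, geven u -> geven (r u);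
  grhom_odd : forall u, godd u -> godd (r u)
}.

(* objects of Gr^(k): Lambda_n with n <= k; k = None means k = infinity *)
Definition inGr (k : option nat) (n : nat) : Prop :=
  match k with None => True | Some k => (n <= k)%N end.

(* \bar E_{Lambda_m} = (E_0 (x) Lambda_even) (+) (E_1 (x) Lambda_odd):   *)
(* component at lambda_I lies in E_{|I| mod 2}; product topology.        *)
Section Ebar.
Variables (E : slcs) (m : nat).
Definition ebar_car := forall I : {set 'I_m}, par E (odd #|I|).
Definition eb_zero : ebar_car := fun I => vzero.
Definition eb_add (x y : ebar_car) : ebar_car := fun I => vadd (x I) (y I).
Definition eb_opp (x : ebar_car) : ebar_car := fun I => vopp (x I).
Definition eb_scal (a : R) (x : ebar_car) : ebar_car := fun I => vscal a (x I).
Definition eb_sidx := {I : {set 'I_m} & sidx (par E (odd #|I|))}.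
Definition eb_snorm (s : eb_sidx) (x : ebar_car) : R :=
  snorm (projT2 s) (x (projT1 s)).

Ltac fe := intros; apply functional_extensionality_dep; intro; unfold eb_add,
  eb_opp, eb_scal, eb_zero.
Lemma eb_addA x y z : eb_add x (eb_add y z) = eb_add (eb_add x y) z.
Proof. fe; apply vaddA. Qed.
Lemma eb_addC x y : eb_add x y = eb_add y x.
Proof. fe; apply vaddC. Qed.
Lemma eb_add0 x : eb_add eb_zero x = x.
Proof. fe; apply vadd0. Qed.
Lemma eb_addN x : eb_add (eb_opp x) x = eb_zero.
Proof. fe; apply vaddN. Qed.
Lemma eb_scal1 x : eb_scal 1 x = x.
Proof. fe; apply vscal1. Qed.
Lemma eb_scalA a b x : eb_scal a (eb_scal b x) = eb_scal (a * b) x.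
Proof. fe; apply vscalA. Qed.
Lemma eb_scalDr a x y : eb_scal a (eb_add x y) = eb_add (eb_scal a x) (eb_scal a y).
Proof. fe; apply vscalDr. Qed.
Lemma eb_scalDl a b x : eb_scal (a + b) x = eb_add (eb_scal a x) (eb_scal b x).
Proof. fe; apply vscalDl. Qed.
Lemma eb_snorm_add i x y : eb_snorm i (eb_add x y) <= eb_snorm i x + eb_snorm i y.
Proof. apply snorm_add. Qed.
Lemma eb_snorm_scal i a x : eb_snorm i (eb_scal a x) = Rabs a * eb_snorm i x.
Proof. apply snorm_scal. Qed.
Lemma eb_snorm_sep x : (forall i, eb_snorm i x = 0) -> x = eb_zero.
Proof.
move=> H; apply functional_extensionality_dep => I; apply snorm_sep => i.
exact: (H (existT _ I i)).
Qed.

Definition ebar : lcs :=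
  @LCS ebar_car eb_zero eb_add eb_opp eb_scal eb_addA eb_addC eb_add0 eb_addN
    eb_scal1 eb_scalA eb_scalDr eb_scalDl eb_sidx eb_snorm eb_snorm_add
    eb_snorm_scal eb_snorm_sep.
End Ebar.

(* \bar E_rho = id (x) rho for rho : Lambda_a -> Lambda_b *)
Definition ebar_map (E : slcs) a b (r : grass a -> grass b) (x : ebar E a)
  : ebar E b :=
  fun J => \big[vadd/vzero]_(I : {set 'I_a})
     vscal (r (gbasis I) J) (pcast E (odd #|I|) (odd #|J|) (x I)).

Arguments ebar_map E [a b] r x.

(* u . w  for u in Lambda_m and w in E_p: the element u (x) w of \bar E *)
Definition embed (E : slcs) m (u : grass m) (p : bool) (w : par E p) : ebar E m :=
  fun K => vscal (u K) (pcast E p (odd #|K|) w).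

Arguments embed {E m} u p w.

Definition is_open_subfunctor (k : option nat) (E : slcs)
  (U : forall n, ebar E n -> Prop) : Prop :=
  (forall n, inGr k n -> is_open (U n)) /\
  (forall a b (r : grass a -> grass b), inGr k a -> inGr k b -> is_grhom r ->
     forall x, U a x -> U b (ebar_map E r x)).

Definition is_nat_trans (k : option nat) (E F : slcs)
  (U : forall n, ebar E n -> Prop) (f : forall n, ebar E n -> ebar F n) : Prop :=
  forall a b (r : grass a -> grass b), inGr k a -> inGr k b -> is_grhom r ->
    forall x, U a x -> f b (ebar_map E r x) = ebar_map F r (f a x).

From HB Require Import structures.
From Stdlib Require Import Reals Lra Classical FunctionalExtensionality.
From mathcomp Require Import all_boot.
Set Implicit Arguments. Unset Strict Implicit. Unset Printing Implicit Defensive.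
Local Open Scope R_scope.

(* For a generator λ_j of Λ_m, the substitution λ_j ↦ 2 λ_j is a graded algebra
   endomorphism of Λ_m, multiplying λ_K by 2^[j ∈ K]. Naturality of f, carried
   through the difference quotients, makes d^n f_{Λ_m} commute with the induced map
   on \bar E_{Λ_m}; that map fixes x and multiplies y_i by 2^[j ∈ I_i], while d^n f(x)
   is homogeneous in each direction. So the λ_K-component of d^n f(x)(y_1,...,y_n)
   vanishes unless [j ∈ K] = #{i | j ∈ I_i} for every j. If some j lies in two of
   the I_i this never holds and the derivative is 0; otherwise only K = ∪ I_i
   survives, and λ_{I_1}...λ_{I_n} = ±λ_K. *)

HB.instance Definition _ (X : lcs) :=
  Monoid.isComLaw.Build X vzero (@vadd X) (@vaddA X) (@vaddC X) (@vadd0 X).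
HB.instance Definition _ :=
  Monoid.isComLaw.Build R 0 Rplus (fun x y z => esym (Rplus_assoc x y z))
    Rplus_comm Rplus_0_l.
HB.instance Definition _ :=
  Monoid.isComLaw.Build R 1 Rmult (fun x y z => esym (Rmult_assoc x y z))
    Rmult_comm Rmult_1_l.
HB.instance Definition _ := Monoid.isMulLaw.Build R 0 Rmult Rmult_0_l Rmult_0_r.
HB.instance Definition _ :=
  Monoid.isAddLaw.Build R Rmult Rplus Rmult_plus_distr_r Rmult_plus_distr_l.

Section VectorFacts.
Variable X : lcs.
Implicit Types (x y z : X) (a b : R).

Lemma vaddr0 x : vadd x vzero = x.
Proof. by rewrite vaddC vadd0. Qed.

Lemma vadd_cancel x y z : vadd x y = vadd x z -> y = z.
Proof. by move=> H; rewrite -[y]vadd0 -(vaddN x) -vaddA H vaddA vaddN vadd0. Qed.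

Lemma vscal0 x : vscal 0 x = vzero.
Proof. by apply: (@vadd_cancel (vscal 0 x)); rewrite vaddr0 -vscalDl Rplus_0_l. Qed.

Lemma vscalx0 a : vscal a (vzero : X) = vzero.
Proof. by rewrite -(vscal0 vzero) vscalA Rmult_0_r. Qed.

Lemma vopp_scal x : vopp x = vscal (-1) x.
Proof.
apply: (@vadd_cancel x); rewrite vaddC vaddN -{1}(vscal1 x) -vscalDl.
by rewrite Rplus_opp_r vscal0.
Qed.

Lemma vopp_opp x : vopp (vopp x) = x.
Proof. by apply: (@vadd_cancel (vopp x)); rewrite vaddN vaddC vaddN. Qed.

Lemma vsub_eq0 x y : vsub x y = vzero -> x = y.
Proof. by rewrite /vsub => H; rewrite -[x]vaddr0 -(vaddN y) vaddA H vadd0. Qed.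

Lemma vsub_trans x y z : vadd (vsub x y) (vsub y z) = vsub x z.
Proof. by rewrite /vsub -vaddA (vaddA (vopp y)) vaddN vadd0. Qed.

Lemma vsub_addl x y : vsub (vadd x y) x = y.
Proof. by rewrite /vsub vaddC vaddA vaddN vadd0. Qed.

Lemma vscal_sub a x y : vscal a (vsub x y) = vsub (vscal a x) (vscal a y).
Proof. by rewrite /vsub vscalDr !vopp_scal !vscalA Rmult_comm. Qed.

Lemma vscal_inj a b x : vscal a x = vscal b x -> a <> b -> x = vzero.
Proof.
move=> Hab /Rminus_eq_contra Hab0.
have H0 : vscal (a - b) x = vzero.
  by rewrite vscalDl Hab -vscalDl Rplus_opp_r vscal0.
by rewrite -(vscal1 x) -(Rinv_l _ Hab0) -vscalA H0 vscalx0.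
Qed.

Lemma snorm0 i : snorm i (vzero : X) = 0.
Proof. by rewrite -(vscal0 vzero) snorm_scal Rabs_R0 Rmult_0_l. Qed.

Lemma snorm_ge0 i x : 0 <= snorm i x.
Proof.
have := snorm_add i x (vopp x).
rewrite vaddC vaddN snorm0 vopp_scal snorm_scal Rabs_Ropp Rabs_R1; lra.
Qed.

Lemma snorm_vsubC i x y : snorm i (vsub x y) = snorm i (vsub y x).
Proof.
have -> : vsub x y = vscal (-1) (vsub y x).
  by rewrite vscal_sub -!vopp_scal /vsub vopp_opp vaddC.
by rewrite snorm_scal Rabs_Ropp Rabs_R1 Rmult_1_l.
Qed.

Lemma big_snorm_ge0 y (L : seq (sidx X)) : 0 <= \big[Rplus/0]_(i <- L) snorm i y.
Proof.
by apply: (@big_ind R (fun r => 0 <= r)) => [|a b|i _]; [lra | lra | exact: snorm_ge0].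
Qed.

Lemma snorm_le_big y (L : seq (sidx X)) i :
  List.In i L -> snorm i y <= \big[Rplus/0]_(j <- L) snorm j y.
Proof.
elim: L => [|a L IH] //= Hi; rewrite big_cons.
have := big_snorm_ge0 y L; have := snorm_ge0 a y.
case: Hi => [<-|/IH]; lra.
Qed.

Lemma open_small_step (U : X -> Prop) z y : is_open U -> U z ->
  forall d, 0 < d -> exists t, t <> 0 /\ Rabs t < d /\ U (vadd z (vscal t y)).
Proof.
move=> HU Hz d Hd; have [L [e [He HL]]] := HU z Hz.
have := big_snorm_ge0 y L; set S := \big[Rplus/0]_(i <- L) _ => HS.
set r := Rmin d e.
have Hr : 0 < r by apply: Rmin_pos.
have Hrd : r <= d := Rmin_l d e.
have Hre : r <= e := Rmin_r d e.
have Ht : 0 < r / (2 * (S + 1)) by apply: Rdiv_lt_0_compat; lra.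
have Htr : r / (2 * (S + 1)) * (2 * (S + 1)) = r by field; lra.
exists (r / (2 * (S + 1))); split; first lra.
split; first by rewrite Rabs_pos_eq; nra.
apply: HL => i Hi; rewrite vsub_addl snorm_scal Rabs_pos_eq; last lra.
have := snorm_le_big y Hi; have := snorm_ge0 i y; rewrite -/S; nra.
Qed.

End VectorFacts.

Definition vlinear (X Y : lcs) (M : X -> Y) : Prop :=
  (forall x y, M (vadd x y) = vadd (M x) (M y)) /\
  (forall a x, M (vscal a x) = vscal a (M x)).

Definition vbounded (X Y : lcs) (M : X -> Y) : Prop :=
  forall j, exists i c, 0 <= c /\ forall x, snorm j (M x) <= c * snorm i x.

Lemma vlinear_sub (X Y : lcs) (M : X -> Y) x y :
  vlinear M -> M (vsub x y) = vsub (M x) (M y).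
Proof. by case=> Madd Mscal; rewrite /vsub Madd !vopp_scal Mscal. Qed.

Lemma vlinear_id {X : lcs} : vlinear (@id X).
Proof. by []. Qed.

Lemma vlinear_scal {X : lcs} a : vlinear (@vscal X a).
Proof. by split=> [x y|b x]; rewrite ?vscalDr // !vscalA Rmult_comm. Qed.

Lemma vbounded_scal {X : lcs} a : vbounded (@vscal X a).
Proof.
move=> j; exists j, (Rabs a); split=> [|x]; first exact: Rabs_pos.
by rewrite snorm_scal; apply: Rle_refl.
Qed.

Definition vlim (Y : lcs) (P : R -> Prop) (g : R -> Y) (a : Y) : Prop :=
  forall j eps, 0 < eps -> exists d, 0 < d /\
    forall t, t <> 0 -> Rabs t < d -> P t -> snorm j (vsub (g t) a) < eps.

Section Limits.
Variable Y : lcs.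
Implicit Types (P Q : R -> Prop) (g h : R -> Y) (a b : Y).

Lemma vlim_unique P g a b :
  (forall d, 0 < d -> exists t, t <> 0 /\ Rabs t < d /\ P t) ->
  vlim P g a -> vlim P g b -> a = b.
Proof.
move=> HP Ha Hb; apply: vsub_eq0; apply: snorm_sep => j.
apply: Rle_antisym; last exact: snorm_ge0.
apply: Rnot_lt_le => Hpos.
have He : 0 < snorm j (vsub a b) / 2 by lra.
have [da [Hda Ha']] := Ha j _ He; have [db [Hdb Hb']] := Hb j _ He.
have [t [Ht0 [Htd Pt]]] := HP (Rmin da db) (Rmin_pos _ _ Hda Hdb).
have := Ha' t Ht0 (Rlt_le_trans _ _ _ Htd (Rmin_l _ _)) Pt.
have := Hb' t Ht0 (Rlt_le_trans _ _ _ Htd (Rmin_r _ _)) Pt.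
have := snorm_add j (vsub a (g t)) (vsub (g t) b).
rewrite vsub_trans (snorm_vsubC j a (g t)); lra.
Qed.

Lemma vlim_ext P Q g h a : vlim Q g a ->
  (forall t, t <> 0 -> P t -> Q t /\ h t = g t) -> vlim P h a.
Proof.
move=> Hg HPQ j eps Heps; have [d [Hd Hd']] := Hg j eps Heps.
exists d; split=> // t Ht0 Htd Pt; have [Qt ->] := HPQ t Ht0 Pt; exact: Hd'.
Qed.

Lemma vlim_rescale P g a c : c <> 0 ->
  vlim P g a -> vlim (fun t => P (c * t)) (fun t => g (c * t)) a.
Proof.
move=> Hc Hg j eps Heps; have [d [Hd Hd']] := Hg j eps Heps.
have Hac : 0 < Rabs c by apply: Rabs_pos_lt.
exists (d / Rabs c); split=> [|t Ht0 Htd Pt]; first exact: Rdiv_lt_0_compat.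
apply: Hd' => //; first exact: Rmult_integral_contrapositive.
rewrite Rabs_mult; apply: (Rmult_lt_reg_r (/ Rabs c)); first exact: Rinv_0_lt_compat.
by rewrite Rmult_comm -Rmult_assoc Rinv_l ?Rmult_1_l; lra.
Qed.

End Limits.

Lemma vlim_map (X Y : lcs) (M : X -> Y) P g a : vlinear M -> vbounded M ->
  vlim P g a -> vlim P (fun t => M (g t)) (M a).
Proof.
move=> Mlin Mbnd Hg j eps Heps; have [i [c [Hc Hbound]]] := Mbnd j.
have Hc1 : 0 < eps / (c + 1) by apply: Rdiv_lt_0_compat; lra.
have Hce : eps / (c + 1) * (c + 1) = eps by field; lra.
have [d [Hd Hd']] := Hg i _ Hc1.
exists d; split=> // t Ht0 Htd Pt; rewrite -vlinear_sub //.
have := Hbound (vsub (g t) a); have := Hd' t Ht0 Htd Pt; nra.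
Qed.

Definition dquot (X Y : lcs) (D : X -> seq X -> Y) z ys y t : Y :=
  vscal (/ t) (vsub (D (vadd z (vscal t y)) ys) (D z ys)).

Section DirectionalDerivatives.
Variables (X Y : lcs) (U : X -> Prop) (f : X -> Y) (D : X -> seq X -> Y).
Hypotheses (HUo : is_open U) (HD : is_dfamily U f D).

Lemma dfamily_dquot z ys y : U z ->
  vlim (fun t => U (vadd z (vscal t y))) (dquot D z ys y) (D z (rcons ys y)).
Proof. by move=> Hz; apply: HD.2. Qed.

Lemma dfamily_scal_last c z ys y : c <> 0 -> U z ->
  D z (rcons ys (vscal c y)) = vscal c (D z (rcons ys y)).
Proof.
move=> Hc Hz.
apply: (vlim_unique (open_small_step _ HUo Hz) (dfamily_dquot _ _ Hz)).
have Hlim := vlim_map (vlinear_scal c) (vbounded_scal c)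
               (vlim_rescale Hc (dfamily_dquot ys y Hz)).
refine (vlim_ext Hlim _) => t Ht0 Pt.
rewrite vscalA Rmult_comm in Pt; split=> //.
rewrite /dquot vscalA Rmult_comm vscalA; congr (vscal _ (vsub (D (vadd z _) _) _)).
by field.
Qed.

Lemma dfamily_intertwine_step (L : X -> X) (M : Y -> Y) A B y :
  vlinear L -> (forall z, U z -> U (L z)) -> vlinear M -> vbounded M ->
  (forall z, U z -> D (L z) A = M (D z B)) ->
  forall z, U z -> D (L z) (rcons A (L y)) = M (D z (rcons B y)).
Proof.
move=> Llin HLU Mlin Mbnd HAB z Hz.
have L_line t : L (vadd z (vscal t y)) = vadd (L z) (vscal t (L y)).
  by rewrite Llin.1 Llin.2.
apply: (vlim_unique (open_small_step y HUo Hz)).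
- refine (vlim_ext (dfamily_dquot A (L y) (HLU z Hz)) _) => t _ Pt.
  by rewrite -L_line; split=> //; apply: HLU.
- refine (vlim_ext (vlim_map Mlin Mbnd (dfamily_dquot B y Hz)) _) => t _ Pt.
  by split=> //; rewrite /dquot -L_line !HAB // Mlin.2 (vlinear_sub _ _ Mlin).
Qed.

Lemma dfamily_scal_all (cs : nat -> R) (ys : nat -> X) l z :
  (forall i, cs i <> 0) -> U z ->
  D z [seq vscal (cs i) (ys i) | i <- l] =
  vscal (\big[Rmult/1]_(i <- l) cs i) (D z [seq ys i | i <- l]).
Proof.
move=> Hcs; elim/last_ind: l z => [|l i IH] z Hz; first by rewrite big_nil vscal1.
rewrite !map_rcons dfamily_scal_last // big_rcons /= Rmult_comm -vscalA; congr vscal.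
exact: (@dfamily_intertwine_step id _ _ _ (ys i) vlinear_id (fun _ h => h)
          (vlinear_scal _) (vbounded_scal _) IH z Hz).
Qed.

End DirectionalDerivatives.

Section GrassmannAlgebra.
Variable m : nat.
Implicit Types (u v : grass m) (I J K : {set 'I_m}).

Lemma big_gbasis (F : {set 'I_m} -> R) I : \big[Rplus/0]_J (gbasis I J * F J) = F I.
Proof.
rewrite (bigD1 I) //= big1 => [|J /negbTE HJ]; last by rewrite /gbasis HJ; ring.
by rewrite /gbasis eqxx; ring.
Qed.

Lemma gmul_basis I J : gmul (gbasis I) (gbasis J) = gsign I J.
Proof.
apply: functional_extensionality => K; rewrite /gmul.
under eq_bigr => I' _ do under eq_bigr => J' _ do rewrite Rmult_assoc.
under eq_bigr => I' _ do rewrite -big_distrr.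
by rewrite big_gbasis big_gbasis.
Qed.

Lemma gmulZl c u v : gmul (gscale c u) v = gscale c (gmul u v).
Proof.
apply: functional_extensionality => K; rewrite /gmul /gscale big_distrr /=.
by apply: eq_bigr => I _; rewrite big_distrr /=; apply: eq_bigr => J _; ring.
Qed.

Lemma gmulZr c u v : gmul u (gscale c v) = gscale c (gmul u v).
Proof.
apply: functional_extensionality => K; rewrite /gmul /gscale big_distrr /=.
by apply: eq_bigr => I _; rewrite big_distrr /=; apply: eq_bigr => J _; ring.
Qed.

Lemma gscaleA a b u : gscale a (gscale b u) = gscale (a * b) u.
Proof. by apply: functional_extensionality => K; rewrite /gscale; ring. Qed.

Lemma gsign_neq0 I J K : gsign I J K <> 0 -> [disjoint I & J] /\ K = I :|: J.
Proof. by rewrite /gsign; case: andP => [[HIJ /eqP ->]|]. Qed.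

Lemma gsign_disjoint I J : [disjoint I & J] ->
  gsign I J = gscale ((-1) ^ ninv I J) (gbasis (I :|: J)).
Proof.
move=> HIJ; apply: functional_extensionality => K.
by rewrite /gsign /gscale /gbasis HIJ /=; case: (K == _); ring.
Qed.

Lemma gbasis0_mul : gmul (gbasis set0) (gbasis set0) = gbasis (set0 : {set 'I_m}).
Proof.
have ninv0 : ninv (set0 : {set 'I_m}) set0 = 0%N.
  by apply/eqP; rewrite cards_eq0; apply/eqP/setP => p; rewrite !inE.
have set0_disj : [disjoint set0 & (set0 : {set 'I_m})] by rewrite -setI_eq0 set0I.
rewrite gmul_basis gsign_disjoint // ninv0 setU0.
by apply: functional_extensionality => K; rewrite /gscale /=; ring.
Qed.

Lemma mem_bigcup_seq (Is : nat -> {set 'I_m}) (l : seq nat) j :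
  (j \in \bigcup_(i <- l) Is i) = has (fun i => j \in Is i) l.
Proof. by rewrite (big_morph (fun S : {set 'I_m} => j \in S) (in_setU j) (in_set0 j)) big_has. Qed.

Lemma gbasis_prod (Is : nat -> {set 'I_m}) (l : seq nat) : uniq l ->
  {in l &, forall i j, i <> j -> [disjoint Is i & Is j]} ->
  exists2 sg, sg <> 0 &
    foldr (@gmul m) (gbasis set0) [seq gbasis (Is i) | i <- l] =
    gscale sg (gbasis (\bigcup_(i <- l) Is i)).
Proof.
elim: l => [_ _|a l IH /andP[Hal Hl] Hdis] /=.
  exists 1; first lra.
  by rewrite big_nil; apply: functional_extensionality => K; rewrite /gscale; ring.
have Hdis_l : {in l &, forall i j, i <> j -> [disjoint Is i & Is j]}.
  by move=> i j Hi Hj; apply: Hdis; rewrite inE ?Hi ?Hj orbT.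
have [sg Hsg ->] := IH Hl Hdis_l.
have Ha_l : [disjoint Is a & \bigcup_(i <- l) Is i].
  rewrite disjoint_subset; apply/subsetP => j Hja; rewrite !inE mem_bigcup_seq.
  apply/hasPn => i Hi; have Hai : a <> i by move=> Eai; rewrite Eai Hi in Hal.
  have Hil : i \in a :: l by rewrite inE Hi orbT.
  by rewrite (disjointFr (Hdis a i (mem_head a l) Hil Hai) Hja).
exists (sg * (-1) ^ ninv (Is a) (\bigcup_(i <- l) Is i)).
  by apply: Rmult_integral_contrapositive; split=> //; apply: pow_nonzero; lra.
by rewrite gmulZr gmul_basis gsign_disjoint // gscaleA big_cons.
Qed.

End GrassmannAlgebra.

Definition gweight m (s : {set 'I_m} -> R) (u : grass m) : grass m :=
  fun K => s K * u K.

Definition gmultiplicative m (s : {set 'I_m} -> R) : Prop :=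
  s set0 = 1 /\ forall I J : {set 'I_m}, [disjoint I & J] -> s (I :|: J) = s I * s J.

Lemma gweight_grhom m (s : {set 'I_m} -> R) : gmultiplicative s ->
  is_grhom (gweight s).
Proof.
case=> s0 sU; split=> [u v|c u||u v|u Hu I HI|u Hu I HI];
  rewrite /gweight /gadd /gscale /gbasis; try (apply: functional_extensionality => K).
- ring.
- ring.
- by case: eqP => [->|_]; rewrite ?s0; ring.
- rewrite /gmul big_distrr /=; apply: eq_bigr => I _; rewrite big_distrr /=.
  apply: eq_bigr => J _; have [->|/gsign_neq0 [HIJ ->]] := Req_dec (gsign I J K) 0.
    ring.
  by rewrite sU //; ring.
- by rewrite Hu //; ring.
- by rewrite Hu //; ring.
Qed.

Definition gincl0 m (u : grass 0) : grass m := gscale (u set0) (gbasis set0).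

Lemma set_ord0 (I : {set 'I_0}) : I = set0.
Proof. by apply/setP => -[]. Qed.

Lemma grass0_eq (u : grass 0) : u = gscale (u set0) (gbasis set0).
Proof.
apply: functional_extensionality => I.
by rewrite /gscale /gbasis (set_ord0 I) eqxx Rmult_1_r.
Qed.

Lemma gincl0_grhom m : is_grhom (@gincl0 m).
Proof.
split=> [u v|c u||u v|u Hu I HI|u Hu I HI]; rewrite /gincl0 /gscale.
- by apply: functional_extensionality => K; rewrite /gadd /gscale; ring.
- by apply: functional_extensionality => K; rewrite /gscale; ring.
- by apply: functional_extensionality => K; rewrite /gbasis eqxx; ring.
- rewrite {1}(grass0_eq u) {1}(grass0_eq v) !gmulZl !gmulZr !gbasis0_mul.
  by apply: functional_extensionality => K; rewrite /gscale /gbasis eqxx; ring.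
- by rewrite /gbasis; case: eqP => [HI0|_]; [rewrite HI0 cards0 in HI | ring].
- by rewrite Hu ?cards0 //; ring.
Qed.

Section SuperSpaces.
Context {E : slcs}.

Lemma pcast_id b (w : par E b) : pcast E b b w = w.
Proof. by case: b w. Qed.

Lemma pcast0 b c : pcast E b c vzero = vzero.
Proof. by case: b; case: c. Qed.

Lemma embed0 m (u : grass m) p : embed u p (vzero : par E p) = vzero.
Proof. by apply: functional_extensionality_dep => K; rewrite /embed pcast0 vscalx0. Qed.

Definition ebar_weight m (s : {set 'I_m} -> R) (x : ebar E m) : ebar E m :=
  fun J => vscal (s J) (x J).

Lemma ebar_weight_linear m (s : {set 'I_m} -> R) : vlinear (ebar_weight s).
Proof.
split=> [x y|a x]; apply: functional_extensionality_dep => J.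
  exact: vscalDr.
by rewrite /ebar_weight /= /eb_scal !vscalA Rmult_comm.
Qed.

Lemma ebar_weight_bounded m (s : {set 'I_m} -> R) : vbounded (ebar_weight s).
Proof.
move=> j; exists j, (Rabs (s (projT1 j))); split=> [|x]; first exact: Rabs_pos.
by rewrite /= /eb_snorm snorm_scal; apply: Rle_refl.
Qed.

Lemma ebar_map_gweight m (s : {set 'I_m} -> R) (x : ebar E m) :
  ebar_map E (gweight s) x = ebar_weight s x.
Proof.
apply: functional_extensionality_dep => J; rewrite /ebar_map (bigD1 J) //=.
rewrite big1 => [|I HI]; last by rewrite /gweight /gbasis eq_sym (negbTE HI) Rmult_0_r vscal0.
by rewrite vaddr0 /gweight /gbasis eqxx Rmult_1_r pcast_id.
Qed.

Lemma ebar_weight_embed m (s : {set 'I_m} -> R) I p (w : par E p) :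
  ebar_weight s (embed (gbasis I) p w) = vscal (s I) (embed (gbasis I) p w).
Proof.
apply: functional_extensionality_dep => J; rewrite /ebar_weight /embed /= /eb_scal /gbasis.
by case: eqP => [->|_]; rewrite // !vscal0 !vscalx0.
Qed.

Lemma ebar_map_gincl0 m p (w : par E p) :
  ebar_map E (@gincl0 m) (embed (gbasis set0) p w) = embed (gbasis set0) p w.
Proof.
apply: functional_extensionality_dep => J; rewrite /ebar_map (bigD1 set0) //.
rewrite big1 => [|I]; last by rewrite (set_ord0 I) eqxx.
rewrite Monoid.mulm1 /embed /gincl0 /gscale /gbasis !eqxx.
case: eqP => [->|_]; last by rewrite Rmult_0_r !vscal0.
by rewrite !cards0 pcast_id !vscalA !Rmult_1_l.
Qed.

End SuperSpaces.

(* [v] is homogeneous of degree [deg j] in each generator λ_j, the monomial λ_K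
   having degree [j \in K] in λ_j. *)
Definition has_multidegree (F : slcs) m (v : ebar F m) (deg : 'I_m -> nat) : Prop :=
  forall j (K : {set 'I_m}), nat_of_bool (j \in K) <> deg j -> v K = vzero.

(* [gweight (gen_weight j)] is the endomorphism of Λ_m scaling λ_j by 2. *)
Definition gen_weight m (j : 'I_m) (K : {set 'I_m}) : R := 2 ^ (j \in K).

Lemma gen_weight_multiplicative m (j : 'I_m) : gmultiplicative (gen_weight j).
Proof.
split=> [|I J HIJ]; rewrite /gen_weight ?in_set0 // in_setU.
case HI: (j \in I); case HJ: (j \in J) => /=; try ring.
by rewrite (disjointFr HIJ HI) in HJ.
Qed.

Lemma prod_gen_weight m (j : 'I_m) (Is : nat -> {set 'I_m}) (l : seq nat) :
  \big[Rmult/1]_(i <- l) gen_weight j (Is i) = 2 ^ count (fun i => j \in Is i) l.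
Proof. by elim: l => [|a l IH]; rewrite ?big_nil ?big_cons //= IH -pow_add. Qed.

Lemma pow2_inj (a b : nat) : 2 ^ a = 2 ^ b -> a = b.
Proof.
move=> Hab; case: (ltngtP a b) => // /ltP Hlt.
- by have := Rlt_pow 2 _ _ ltac:(lra) Hlt; lra.
- by have := Rlt_pow 2 _ _ ltac:(lra) Hlt; lra.
Qed.

Section WeightNaturality.
(* Otherwise the index [n] of [U] and [f] would become implicit. *)
Local Unset Implicit Arguments.
Variables (k : option nat) (E F : slcs) (U : forall n, ebar E n -> Prop)
  (f : forall n, ebar E n -> ebar F n).
Hypotheses (HU : is_open_subfunctor k U) (Hf : is_nat_trans k U f).
Variables (m : nat) (D : ebar E m -> seq (ebar E m) -> ebar F m).
Hypotheses (Hmk : inGr k m) (HD : is_dfamily (U m) (f m) D).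
Local Set Implicit Arguments.

Lemma dfamily_ebar_weight (s : {set 'I_m} -> R) l z : gmultiplicative s -> U m z ->
  D (ebar_weight s z) (map (ebar_weight s) l) = ebar_weight s (D z l).
Proof.
move=> Hs; have Hhom := gweight_grhom Hs.
have HUs z' : U m z' -> U m (ebar_weight s z').
  by move=> Hz'; rewrite -ebar_map_gweight; apply: HU.2.
elim/last_ind: l z => [|l y IH] z Hz.
  rewrite /= (HD.1 _ (HUs _ Hz)) (HD.1 _ Hz) -!ebar_map_gweight.
  exact: (Hf _ _ _ Hmk Hmk Hhom _ Hz).
rewrite map_rcons.
exact: (dfamily_intertwine_step (HU.1 m Hmk) HD y (ebar_weight_linear s) HUs
          (ebar_weight_linear s) (ebar_weight_bounded s) IH Hz).
Qed.

Lemma dfamily_weight_support (s : {set 'I_m} -> R) (cs : nat -> R) x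
    (ys : nat -> ebar E m) (l : seq nat) K :
  gmultiplicative s -> (forall i, cs i <> 0) -> U m x -> ebar_weight s x = x ->
  (forall i, i \in l -> ebar_weight s (ys i) = vscal (cs i) (ys i)) ->
  s K <> \big[Rmult/1]_(i <- l) cs i -> D x [seq ys i | i <- l] K = vzero.
Proof.
move=> Hs Hcs Hx Hsx Hys HK.
have := dfamily_ebar_weight [seq ys i | i <- l] Hs Hx.
rewrite Hsx -map_comp ((eq_in_map _ _ _).1 Hys) (dfamily_scal_all (HU.1 m Hmk) HD) // => Hv.
exact: (vscal_inj (f_equal (fun v => v K) Hv) (nesym HK)).
Qed.

Lemma dfamily_multidegree p (x0 : par E p) (Is : nat -> {set 'I_m})
    (ys : nat -> ebar E m) (l : seq nat) :
  U m (embed (gbasis set0) p x0) ->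
  (forall i, i \in l -> exists q (w : par E q), ys i = embed (gbasis (Is i)) q w) ->
  has_multidegree (D (embed (gbasis set0) p x0) [seq ys i | i <- l])
    (fun j => count (fun i => j \in Is i) l).
Proof.
move=> Hx Hys j K HK.
apply: (dfamily_weight_support (gen_weight_multiplicative j)
          (cs := fun i => gen_weight j (Is i))) => //.
- by move=> i; apply: pow_nonzero; lra.
- by rewrite ebar_weight_embed /gen_weight in_set0 vscal1.
- by move=> i /Hys [q [w ->]]; rewrite ebar_weight_embed.
- by rewrite prod_gen_weight => /pow2_inj.
Qed.

End WeightNaturality.

Section Multidegree.
Variables (F : slcs) (m : nat) (v : ebar F m).

Lemma multidegree_zero deg j : has_multidegree v deg -> (1 < deg j)%N -> v = vzero.
Proof.
move=> Hv Hj; apply: functional_extensionality_dep => K; apply: (Hv j) => Edeg.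
by move: Hj; rewrite -Edeg; case: (j \in K).
Qed.

Lemma multidegree_support deg K : has_multidegree v deg ->
  K != [set j | (0 < deg j)%N] -> v K = vzero.
Proof.
move=> Hv HK; have [j Hj] : exists j, (j \in K) != (0 < deg j)%N.
  apply/existsP; apply: contraR HK => /existsPn Hall.
  by apply/eqP/setP => j; rewrite inE; apply/eqP/negPn/Hall.
by apply: (Hv j); move: Hj; case: (j \in K); case: (deg j).
Qed.

Variable Is : nat -> {set 'I_m}.

Lemma multidegree_overlap l i j j0 :
  has_multidegree v (fun j => count (fun i => j \in Is i) l) ->
  i \in l -> j \in l -> i != j -> j0 \in Is i -> j0 \in Is j -> v = vzero.
Proof.
move=> Hv Hi Hj Hij Hi0 Hj0; apply: (multidegree_zero (j := j0) Hv).
rewrite -size_filter; apply: (@uniq_leq_size _ [:: i; j]) => [|a].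
  by rewrite /= inE Hij.
by rewrite !inE mem_filter => /orP [] /eqP ->; apply/andP.
Qed.

Lemma multidegree_embed_gbasis_prod l : uniq l ->
  {in l &, forall i j, i <> j -> [disjoint Is i & Is j]} ->
  has_multidegree v (fun j => count (fun i => j \in Is i) l) ->
  exists w : par F (odd #|\bigcup_(i <- l) Is i|),
    v = embed (foldr (@gmul m) (gbasis set0) [seq gbasis (Is i) | i <- l])
              (odd #|\bigcup_(i <- l) Is i|) w.
Proof.
move=> Hl Hdis Hv; have [sg Hsg ->] := gbasis_prod Hl Hdis.
set S := \bigcup_(i <- l) Is i.
have HS : S = [set j | (0 < count (fun i => j \in Is i) l)%N].
  by apply/setP => j; rewrite inE mem_bigcup_seq has_count.
exists (vscal (/ sg) (v S)); apply: functional_extensionality_dep => K.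
rewrite /embed /gscale /gbasis; case: eqP => [->|/eqP HK].
  by rewrite pcast_id vscalA Rmult_1_r Rinv_r // vscal1.
by rewrite Rmult_0_r vscal0; apply: (multidegree_support Hv); rewrite -HS.
Qed.

End Multidegree.

Theorem mainTheorem2 (k : option nat) (E F : slcs)
  (U : forall n, ebar E n -> Prop) (f : forall n, ebar E n -> ebar F n)
  (HU : is_open_subfunctor k U) (Hf : is_nat_trans k U f)
  (Hs : forall n, inGr k n -> bsmooth (U n) (f n))
  (n m : nat) (Hn : (0 < n)%N) (Hm : (0 < m)%N) (Hmk : inGr k m)
  (x0 : sev E) (Hx : U 0%N (embed (gbasis (m:=0) set0) false x0))
  (Is : nat -> {set 'I_m}) (ys : nat -> ebar E m)
  (HI : forall i, (i < n)%N -> Is i != set0)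
  (Hy : forall i, (i < n)%N -> exists w : par E (odd #|Is i|),
          ys i = embed (gbasis (Is i)) (odd #|Is i|) w)
  (D : ebar E m -> seq (ebar E m) -> ebar F m)
  (HD : is_dfamily (U m) (f m) D) :
  let x := embed (gbasis (m:=m) set0) false x0 in
  let v := D x [seq ys i | i <- iota 0 n] in
  let l := #|\bigcup_(i < n) Is i| in
  (exists w : par F (odd l),
     v = embed (foldr (@gmul m) (gbasis set0) [seq gbasis (Is i) | i <- iota 0 n])
               (odd l) w) /\
  (~ (forall i j, (i < n)%N -> (j < n)%N -> i <> j -> [disjoint Is i & Is j]) ->
     v = vzero).
Proof.
move=> x v l.
have Hx_m : U m x.
  have Hk0 : inGr k 0 by case: k {HU Hf Hs Hmk Hx}.
  by rewrite /x -ebar_map_gincl0; apply: HU.2 Hk0 Hmk (gincl0_grhom m) _ Hx.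
have mem_iota0 i : (i \in iota 0 n) = (i < n)%N by rewrite mem_iota.
have Hdeg : has_multidegree v (fun j => count (fun i => j \in Is i) (iota 0 n)).
  apply: (dfamily_multidegree HU Hf Hmk HD Hx_m) => i; rewrite mem_iota0 => /Hy [w ->].
  by exists (odd #|Is i|), w.
have -> : l = #|\bigcup_(i <- iota 0 n) Is i|.
  have HUn : \bigcup_(0 <= i < n) Is i = \bigcup_(i < n) Is i by rewrite big_mkord.
  by rewrite /l -HUn /index_iota subn0.
case: (classic (forall i j, (i < n)%N -> (j < n)%N -> i <> j -> [disjoint Is i & Is j]))
  => [Hdis | Hoverlap].
  split=> [|/(_ Hdis) //]; apply: multidegree_embed_gbasis_prod Hdeg.
    exact: iota_uniq.
  by move=> i j; rewrite !mem_iota0; exact: Hdis.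
have [i [j [Hi [Hj [Hij /set0Pn [j0]]]]]] : exists i j, (i < n)%N /\ (j < n)%N /\
    i <> j /\ Is i :&: Is j != set0.
  apply: NNPP => Hno; apply: Hoverlap => i j Hi Hj Hij; rewrite -setI_eq0.
  by apply/negPn/negP => Hij'; apply: Hno; exists i, j.
rewrite inE => /andP [Hi0 Hj0].
have v0 : v = vzero.
  by apply: (multidegree_overlap Hdeg _ _ _ Hi0 Hj0); rewrite ?mem_iota0 //; apply/eqP.
by split=> //; exists vzero; rewrite v0 embed0.
Qed.
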